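(* Let $0<\alpha<1$, $\sigma>0$, $N_1$ a positive integer, $h=\sigma^2\alpha^2$, $T=\sigma\alpha\sqrt{N_1}$, $\kappa=\frac\alpha{1-\alpha}$, and let $n\ge1$ be an integer. For $x\in(0,1]$ and complex $u\notin(-\infty,0]$ let $$f(u,x)=\frac{\sin(\alpha\pi)}{\alpha\pi}\frac{1}{2\sqrt u}\frac{xe^{\sqrt u-T}}{e^{\frac1\alpha(\sqrt u-T)}+x}$$ (principal branch of $\sqrt u$). Let $u^*=\frac{1+(1-2\alpha)\sqrt{4\alpha-4\alpha^2+1}}{2(1-\alpha)^2}$, $\gamma=\alpha\log\!\Big(\frac{\frac1\kappa\sqrt{u^*}+1}{\sqrt{u^*}-1}\Big)+\sqrt{u^*}$, $x^*=e^{\frac1\alpha(\gamma-T)}$, $M_0=2\max\left\{\frac{\sigma^2}{4},1+\mathrm{ceil}\!\left(\frac{9\pi^2}{\sigma^2}\right),2\,\mathrm{ceil}\!\left[\left(1+\sqrt{\pi/\sigma}\right)^4\right]\right\}$, and $\Upsilon=\{x\in[x^*,1]:(T+\alpha\log x)^2-\alpha^2\pi^2>M_0h\}$. For $x\in\Upsilon$ put $a=2\alpha\pi(T+\alpha\log x)$. Then, for each choice of sign, $$\left|\int_{h\pm2ia}^{+\infty\pm2ia}f(u,x)e^{\pm i\frac{2n\pi}{h}u}\,\mathrm{d}u\right|=e^{-\frac{4n\pi a}{h}}\left|\int_h^{+\infty}f(t\pm2ia,x)e^{\pm i\frac{2n\pi}{h}t}\,\mathrm{d}t\right|=e^{-\frac{4n\pi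 a}{h}}x^\alpha\,\mathcal{O}(1)$$ uniformly for $x\in\Upsilon$, where the constant in $\mathcal{O}(1)$ is independent of $x$, $h$, $\alpha$, $\sigma$ and $T$.
   Context: $\mathrm{ceil}(y)$ is the least integer $\ge y$. The integral $\int_{h\pm2ia}^{+\infty\pm2ia}$ is along the horizontal half-line $\{t\pm2ia:t\ge h\}$. *)

From Stdlib Require Import Reals.
From Coquelicot Require Import Coquelicot.
Open Scope R_scope.

Definition Cexp (z : C) : C :=
  (exp (fst z) * cos (snd z), exp (fst z) * sin (snd z)).

(* principal square root (branch cut on (-oo,0]):
   sqrt z = sqrt((|z|+Re z)/2) + i sgn(Im z) sqrt((|z|-Re z)/2) *)
Definition Csqrt (z : C) : C :=
  (sqrt ((Cmod z + fst z) / 2),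
   (if Rlt_dec (snd z) 0 then -1 else 1) * sqrt ((Cmod z - fst z) / 2)).

(* ceil(y) = least integer >= y ; Int_part is the floor *)
Definition Rceil (y : R) : R := - IZR (Int_part (- y)).

Definition fA (alpha T : R) (u : C) (x : R) : C :=
  let su := Csqrt u in
  Cmult (RtoC (sin (alpha * PI) / (alpha * PI)))
   (Cdiv (Cmult (RtoC x) (Cexp (Cminus su (RtoC T))))
         (Cmult (RtoC 2)
            (Cmult su (Cplus (Cexp (Cmult (RtoC (/ alpha)) (Cminus su (RtoC T)))) (RtoC x))))).

Definition ustar (alpha : R) : R :=
  (1 + (1 - 2 * alpha) * sqrt (4 * alpha - 4 * alpha ^ 2 + 1)) / (2 * (1 - alpha) ^ 2).

Definition gammaA (alpha : R) : R :=
  let kappa := alpha / (1 - alpha) in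
  alpha * ln ((/ kappa * sqrt (ustar alpha) + 1) / (sqrt (ustar alpha) - 1))
  + sqrt (ustar alpha).

Definition xstar (alpha T : R) : R := exp (/ alpha * (gammaA alpha - T)).

Definition M0 (sigma : R) : R :=
  2 * Rmax (sigma ^ 2 / 4)
        (Rmax (1 + Rceil (9 * PI ^ 2 / sigma ^ 2))
              (2 * Rceil ((1 + sqrt (PI / sigma)) ^ 4))).

Definition is_int_half (g : R -> C) (a : R) (l : C) : Prop :=
  is_RInt_gen g (at_point a) (Rbar_locally p_infty) l.

From Stdlib Require Import Reals Lra FunctionalExtensionality.
From Coquelicot Require Import Coquelicot.
Open Scope R_scope.

(* On the line u = t + i k, |k| = 2a, write sqrt u = p + i q, so that p |q| = a = 2 alpha pi P
   with P = T + alpha log x, and p increases with t.  The denominator of f is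
   e^((p - T)/alpha) e^(i q/alpha) + x with e^((p - T)/alpha) = x e^((p - P)/alpha): if p is far
   from P one of the two terms dominates, and if p is close to P then |q|/alpha = 2 pi P/p is
   within pi/2 of 2 pi, so the two terms do not cancel.  Hence
   |f(t + i k)| <= C x^alpha min(e^(p - P), e^(-(1 - alpha)(p - P)/alpha)) dp/dt, a majorant
   whose integral in the variable p is O(1).  Along the shifted line the oscillating factor
   e^(i c u) equals e^(-2 a c) e^(i c t), which accounts for the factor e^(-4 n pi a/h). *)

Lemma filter_prod_at_point_p_infty (a M : R) (Q : R * R -> Prop) :
  (forall v, M < v -> Q (a, v)) -> filter_prod (at_point a) (Rbar_locally p_infty) Q.
Proof.
intros HQ. apply Filter_prod with (fun u => u = a) (fun v => M < v); [reflexivity | now exists M |].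
intros u v -> Hv. now apply HQ.
Qed.

Lemma is_RInt_gen_p_infty_lim {V : NormedModule R_AbsRing} (f F : R -> V) (a : R) (l : V) :
  (forall b, a <= b -> is_RInt f a b (F b)) ->
  filterlim F (Rbar_locally p_infty) (locally l) ->
  is_RInt_gen f (at_point a) (Rbar_locally p_infty) l.
Proof.
intros HF Hl Q HQ. destruct (Hl Q HQ) as [M HM].
apply (filter_prod_at_point_p_infty a (Rmax M a)). intros v Hv. exists (F v). split.
- apply HF. generalize (Rmax_r M a). lra.
- apply HM. generalize (Rmax_l M a). lra.
Qed.

Lemma filterlim_RInt_p_infty {V : CompleteNormedModule R_AbsRing}
    (f : R -> V) (G : R -> R) (a L : R) :
  (forall u v, a <= u <= v -> ex_RInt f u v) ->
  (forall u v, a <= u <= v -> norm (RInt f u v) <= G v - G u) ->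
  filterlim G (Rbar_locally p_infty) (locally L) ->
  exists I, filterlim (fun b => RInt f a b) (Rbar_locally p_infty) (locally I).
Proof.
intros Hf Hle HG.
assert (Hdiff : forall u v, a < u < v -> minus (RInt f a v) (RInt f a u) = RInt f u v).
{ intros u v Huv. symmetry. apply is_RInt_unique, (is_RInt_Chasles_2 f a u v); [lra | |];
    apply RInt_correct, Hf; lra. }
apply (filterlim_locally_cauchy (F := Rbar_locally p_infty)). intros eps.
destruct (proj1 (filterlim_locally G L) HG (pos_div_2 eps)) as [M HM].
assert (HMa := Rmax_l M a). assert (Haa := Rmax_r M a).
exists (fun b => Rmax M a < b). split; [now exists (Rmax M a)|].
assert (Hsmall : forall u v, Rmax M a < u < v -> norm (RInt f u v) < eps).
{ intros u v Huv. apply (Rle_lt_trans _ _ _ (Hle u v ltac:(lra))).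
  assert (Hu := HM u ltac:(lra)). assert (Hv := HM v ltac:(lra)).
  change (Rabs (G u - L) < eps / 2) in Hu. change (Rabs (G v - L) < eps / 2) in Hv.
  apply Rabs_def2 in Hu. apply Rabs_def2 in Hv. lra. }
intros u v Hu Hv. apply (norm_compat1 (V := V)).
destruct (Rtotal_order u v) as [Huv | [<- | Hvu]].
- rewrite Hdiff by lra. apply Hsmall. lra.
- rewrite minus_eq_zero. eapply Rle_lt_trans; [apply Req_le, norm_zero | apply cond_pos].
- rewrite <- opp_minus, norm_opp, Hdiff by lra. apply Hsmall. lra.
Qed.

Lemma is_RInt_gen_p_infty_le {V : CompleteNormedModule R_AbsRing}
    (f : R -> V) (g G : R -> R) (a L : R) :
  (forall u v, a <= u <= v -> ex_RInt f u v) ->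
  (forall t, a <= t -> norm (f t) <= g t) ->
  (forall u v, a <= u <= v -> is_RInt g u v (G v - G u)) ->
  filterlim G (Rbar_locally p_infty) (locally L) ->
  exists I, is_RInt_gen f (at_point a) (Rbar_locally p_infty) I /\ norm I <= L - G a.
Proof.
intros Hf Hfg Hg HG.
assert (Hle : forall u v, a <= u <= v -> norm (RInt f u v) <= G v - G u).
{ intros u v Huv. apply (norm_RInt_le f g u v); [lra | | now apply RInt_correct, Hf | now apply Hg].
  intros t Ht. apply Hfg. lra. }
destruct (filterlim_RInt_p_infty f G a L Hf Hle HG) as [I HI].
assert (HIgen : is_RInt_gen f (at_point a) (Rbar_locally p_infty) I).
{ apply (is_RInt_gen_p_infty_lim f (fun b => RInt f a b)); [|exact HI].
  intros b Hb. apply RInt_correct, Hf. lra. }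
exists I. split; [exact HIgen|].
apply (RInt_gen_norm (Fa := at_point a) (Fb := Rbar_locally p_infty) f g I (L - G a)).
- apply (filter_prod_at_point_p_infty a a). intros v Hv. simpl. lra.
- apply (filter_prod_at_point_p_infty a a). intros v Hv t Ht. apply Hfg, Ht.
- exact HIgen.
- apply (is_RInt_gen_p_infty_lim g (fun b => G b - G a)).
  + intros b Hb. apply Hg. lra.
  + apply (filterlim_comp _ _ _ G (fun y => y - G a) _ (locally L)); [exact HG|].
    apply (continuous_minus (fun y : R => y) (fun _ => G a));
      [apply continuous_id | apply continuous_const].
Qed.

Lemma continuous_C_pair (f : R -> C) (t : R) :
  continuous (fun t => fst (f t)) t -> continuous (fun t => snd (f t)) t -> continuous f t.
Proof.
intros H1 H2 Q [eps HQ].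
assert (Hpair := filterlim_pair _ _ H1 H2).
change (locally t (fun y => Q (f y))).
apply (filter_imp (fun y => Q (fst (f y), snd (f y)))); [intros y; now destruct (f y)|].
apply Hpair, (Filter_prod _ _ _ (ball (fst (f t)) eps) (ball (snd (f t)) eps));
  try apply locally_ball.
intros u v Hu Hv. apply HQ. now destruct (f t).
Qed.

Lemma continuous_fst_comp (f : R -> C) (t : R) :
  continuous f t -> continuous (fun t => fst (f t)) t.
Proof.
intros Hf. apply (continuous_comp f fst); [exact Hf|]. destruct (f t). apply continuous_fst.
Qed.

Lemma continuous_snd_comp (f : R -> C) (t : R) :
  continuous f t -> continuous (fun t => snd (f t)) t.
Proof.
intros Hf. apply (continuous_comp f snd); [exact Hf|]. destruct (f t). apply continuous_snd.
Qed.

Lemma continuous_Cplus_comp (f g : R -> C) (t : R) :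
  continuous f t -> continuous g t -> continuous (fun t => Cplus (f t) (g t)) t.
Proof. exact (continuous_plus (V := C_R_NormedModule) f g t). Qed.

Lemma continuous_Cminus_comp (f g : R -> C) (t : R) :
  continuous f t -> continuous g t -> continuous (fun t => Cminus (f t) (g t)) t.
Proof. exact (continuous_minus (V := C_R_NormedModule) f g t). Qed.

Lemma continuous_Cmult_comp (f g : R -> C) (t : R) :
  continuous f t -> continuous g t -> continuous (fun t => Cmult (f t) (g t)) t.
Proof.
intros Hf Hg.
assert (H1 := continuous_fst_comp f t Hf). assert (H2 := continuous_snd_comp f t Hf).
assert (H3 := continuous_fst_comp g t Hg). assert (H4 := continuous_snd_comp g t Hg).
apply continuous_C_pair; simpl.
- apply (continuous_minus (fun t => fst (f t) * fst (g t)) (fun t => snd (f t) * snd (g t)));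
    now apply (continuous_mult (K := R_AbsRing)).
- apply (continuous_plus (fun t => fst (f t) * snd (g t)) (fun t => snd (f t) * fst (g t)));
    now apply (continuous_mult (K := R_AbsRing)).
Qed.

Lemma continuous_Cinv_comp (f : R -> C) (t : R) :
  continuous f t -> f t <> 0%C -> continuous (fun t => Cinv (f t)) t.
Proof.
intros Hf Hnz.
assert (H1 := continuous_fst_comp f t Hf). assert (H2 := continuous_snd_comp f t Hf).
assert (Hsq : continuous (fun t => fst (f t) ^ 2 + snd (f t) ^ 2) t).
{ apply (continuous_plus (fun t => fst (f t) ^ 2) (fun t => snd (f t) ^ 2));
    apply (continuous_comp _ (fun y => y ^ 2)); try easy;
    apply (ex_derive_continuous (K := R_AbsRing) (V := R_NormedModule)); auto_derive; easy. }
assert (Hpos : fst (f t) ^ 2 + snd (f t) ^ 2 <> 0).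
{ intros H0. apply Hnz. destruct (f t) as [u v]; simpl in H0.
  assert (u = 0) by nra. assert (v = 0) by nra. now subst. }
apply continuous_C_pair; simpl; unfold Rdiv.
- apply (continuous_mult (K := R_AbsRing) (fun t => fst (f t))); [easy|].
  now apply continuous_Rinv_comp.
- apply (continuous_mult (K := R_AbsRing) (fun t => - snd (f t))).
  + now apply (continuous_opp (fun t => snd (f t))).
  + now apply continuous_Rinv_comp.
Qed.

Lemma continuous_Cexp_comp (f : R -> C) (t : R) :
  continuous f t -> continuous (fun t => Cexp (f t)) t.
Proof.
intros Hf.
assert (H1 := continuous_fst_comp f t Hf). assert (H2 := continuous_snd_comp f t Hf).
assert (He := continuous_exp_comp _ t H1).
apply continuous_C_pair; simpl.
- apply (continuous_mult (K := R_AbsRing) (fun t => exp (fst (f t)))); [exact He|].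
  now apply continuous_cos_comp.
- apply (continuous_mult (K := R_AbsRing) (fun t => exp (fst (f t)))); [exact He|].
  now apply continuous_sin_comp.
Qed.

Lemma Cmod_Cexp (z : C) : Cmod (Cexp z) = exp (fst z).
Proof.
unfold Cmod, Cexp; cbn [fst snd].
replace ((exp (fst z) * cos (snd z)) ^ 2 + (exp (fst z) * sin (snd z)) ^ 2) with (exp (fst z) ^ 2)
  by (assert (H := sin2_cos2 (snd z)); unfold Rsqr in H; nra).
apply sqrt_pow2, Rlt_le, exp_pos.
Qed.

Lemma Cexp_pair (r th : R) : Cexp (r, th) = scal (exp r) (Cexp (0, th)).
Proof. rewrite scal_R_Cmult. unfold Cexp, Cmult, RtoC; simpl. rewrite exp_0. f_equal; ring. Qed.

(* Unlike [Cmod_div], no hypothesis [y <> 0]: both sides vanish there since [/ 0 = 0]. *)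
Lemma Cmod_Cdiv (x y : C) : Cmod (x / y) = Cmod x / Cmod y.
Proof.
destruct (Ceq_dec y 0) as [-> | Hy]; [|now apply Cmod_div].
unfold Cdiv. replace (Cinv 0) with (RtoC 0).
2:{ unfold Cinv, RtoC; cbn [fst snd]. replace (0 ^ 2 + 0 ^ 2) with 0 by ring.
    unfold Rdiv. rewrite Rinv_0. f_equal; ring. }
rewrite Cmult_0_r, Cmod_0. unfold Rdiv. rewrite Rinv_0. ring.
Qed.

Lemma Csqrt_sqr (z : C) : Cmult (Csqrt z) (Csqrt z) = z.
Proof.
destruct z as [a b]. unfold Csqrt; cbn [fst snd].
set (m := Cmod (a, b)).
assert (Hm : m ^ 2 = a ^ 2 + b ^ 2) by (apply pow2_sqrt; nra).
assert (Ha := re_le_Cmod (a, b)). fold m in Ha. simpl in Ha. apply Rabs_le_between in Ha.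
assert (Hp := sqrt_sqrt ((m + a) / 2) ltac:(lra)).
assert (Hq := sqrt_sqrt ((m - a) / 2) ltac:(lra)).
assert (Hpq : sqrt ((m + a) / 2) * sqrt ((m - a) / 2) = Rabs b / 2).
{ rewrite <- sqrt_mult, <- (sqrt_pow2 (Rabs b / 2)) by (generalize (Rabs_pos b); lra).
  f_equal. rewrite <- (pow2_abs b) in Hm. nra. }
unfold Cmult; cbn [fst snd]. f_equal.
- destruct (Rlt_dec b 0); lra.
- destruct (Rlt_dec b 0) as [Hb | Hb].
  + rewrite Rabs_left in Hpq by lra. nra.
  + rewrite Rabs_right in Hpq by lra. nra.
Qed.

Lemma Cmod_Csqrt (z : C) : Cmod (Csqrt z) = sqrt (Cmod z).
Proof.
rewrite <- (Csqrt_sqr z) at 2. rewrite Cmod_mult, sqrt_square; [reflexivity | apply Cmod_ge_0].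
Qed.

Definition Csqrt_re (k t : R) : R := fst (Csqrt (t, k)).

Lemma Cmod_line_gt (k t : R) : k <> 0 -> Rabs t < Cmod (t, k).
Proof.
intros Hk. unfold Cmod; simpl. rewrite <- sqrt_Rsqr_abs. apply sqrt_lt_1_alt.
split; [apply Rle_0_sqr|]. assert (H := Rsqr_pos_lt k Hk). unfold Rsqr in *. lra.
Qed.

Lemma Cmod_line_pos (k t : R) : k <> 0 -> 0 < Cmod (t, k).
Proof. intros Hk. generalize (Cmod_line_gt k t Hk) (Rabs_pos t). lra. Qed.

Lemma Csqrt_re_pos (k t : R) : k <> 0 -> 0 < Csqrt_re k t.
Proof.
intros Hk. apply sqrt_lt_R0. assert (H := Cmod_line_gt k t Hk). apply Rabs_def2 in H. simpl. lra.
Qed.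

Lemma Cmod_line_le (k t : R) : k <> 0 -> 0 <= t ->
  Cmod (t, k) <= 2 * Csqrt_re k t * sqrt (Cmod (t, k)).
Proof.
intros Hk Ht. assert (Hm := Cmod_line_pos k t Hk). assert (Hp := Csqrt_re_pos k t Hk).
assert (Hpp : Csqrt_re k t * Csqrt_re k t = (Cmod (t, k) + t) / 2).
{ apply sqrt_sqrt. assert (H := Cmod_line_gt k t Hk). apply Rabs_def2 in H. simpl. lra. }
assert (Hss := sqrt_sqrt (Cmod (t, k)) ltac:(lra)).
assert (sqrt (Cmod (t, k)) <= 2 * Csqrt_re k t) by (apply Rsqr_incr_0_var; unfold Rsqr; nra).
generalize (sqrt_pos (Cmod (t, k))). nra.
Qed.

Lemma Csqrt_re_ge_sqrt (k t : R) : 0 <= t -> sqrt t <= Csqrt_re k t.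
Proof.
intros Ht. apply sqrt_le_1_alt. assert (H := re_le_Cmod (t, k)). simpl in *.
rewrite Rabs_pos_eq in H by lra. lra.
Qed.

Lemma Im_Csqrt_line (k t : R) : k <> 0 -> snd (Csqrt (t, k)) = k / (2 * Csqrt_re k t).
Proof.
intros Hk. assert (Hp := Csqrt_re_pos k t Hk).
assert (H := Csqrt_sqr (t, k)). unfold Csqrt_re in *.
destruct (Csqrt (t, k)) as [p q]. injection H as _ Hk'. simpl in *. field_simplify_eq; lra.
Qed.

Lemma Csqrt_re_sqr_sub (k t : R) : k <> 0 ->
  Csqrt_re k t ^ 2 - (k / (2 * Csqrt_re k t)) ^ 2 = t.
Proof.
intros Hk. rewrite <- (Im_Csqrt_line k t Hk).
assert (H := Csqrt_sqr (t, k)). unfold Csqrt_re.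
destruct (Csqrt (t, k)) as [p q]. injection H as Ht _. simpl. lra.
Qed.

Lemma sqr_sub_sqr_div_lt (c y z : R) : 0 < y -> y < z -> y ^ 2 - (c / y) ^ 2 < z ^ 2 - (c / z) ^ 2.
Proof.
intros Hy Hyz.
assert ((c / z) ^ 2 <= (c / y) ^ 2).
{ unfold Rdiv. rewrite !Rpow_mult_distr, !pow_inv.
  apply Rmult_le_compat_l; [apply pow2_ge_0|].
  apply Rinv_le_contravar; [nra | apply pow_incr; lra]. }
nra.
Qed.

Lemma Csqrt_re_le (k t P : R) : k <> 0 -> 0 < P ->
  t <= P ^ 2 - (k / (2 * P)) ^ 2 -> Csqrt_re k t <= P.
Proof.
intros Hk HP Ht. apply Rnot_lt_le. intros HPp.
assert (H := sqr_sub_sqr_div_lt (k / 2) P (Csqrt_re k t) HP HPp).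
rewrite <- (Csqrt_re_sqr_sub k t Hk) in Ht.
replace (k / 2 / P) with (k / (2 * P)) in H by (field; lra).
replace (k / 2 / Csqrt_re k t) with (k / (2 * Csqrt_re k t)) in H
  by (field; generalize (Csqrt_re_pos k t Hk); lra).
lra.
Qed.

Lemma Csqrt_re_ge (k t P : R) : k <> 0 -> 0 < P ->
  P ^ 2 - (k / (2 * P)) ^ 2 <= t -> P <= Csqrt_re k t.
Proof.
intros Hk HP Ht. apply Rnot_lt_le. intros HpP. assert (Hp := Csqrt_re_pos k t Hk).
assert (H := sqr_sub_sqr_div_lt (k / 2) (Csqrt_re k t) P Hp HpP).
rewrite <- (Csqrt_re_sqr_sub k t Hk) in Ht.
replace (k / 2 / P) with (k / (2 * P)) in H by (field; lra).
replace (k / 2 / Csqrt_re k t) with (k / (2 * Csqrt_re k t)) in H by (field; lra).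
lra.
Qed.

Lemma is_derive_Csqrt_re (k t : R) : k <> 0 ->
  is_derive (Csqrt_re k) t (Csqrt_re k t / (2 * Cmod (t, k))).
Proof.
intros Hk. assert (Hgt := Cmod_line_gt k t Hk). apply Rabs_def2 in Hgt.
assert (Hp := Csqrt_re_pos k t Hk).
assert (Hpp : Csqrt_re k t * Csqrt_re k t = (Cmod (t, k) + t) / 2) by (apply sqrt_sqrt; lra).
unfold Csqrt_re, Csqrt, Cmod, Rdiv in *; simpl in *.
set (m := sqrt (t * (t * 1) + k * (k * 1))) in *.
set (p := sqrt ((m + t) * / 2)) in *.
auto_derive; fold m; fold p.
- nra.
- field_simplify_eq; [nra | lra].
Qed.

Lemma continuous_Cmod_line (k t : R) : continuous (fun t => Cmod (t, k)) t.
Proof.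
apply continuous_sqrt_comp, (ex_derive_continuous (K := R_AbsRing) (V := R_NormedModule)).
simpl. auto_derive. easy.
Qed.

Lemma continuous_Csqrt_line (k t : R) : continuous (fun t => Csqrt (t, k)) t.
Proof.
assert (Hm := continuous_Cmod_line k t).
apply continuous_C_pair; unfold Csqrt; simpl.
- apply continuous_sqrt_comp, (continuous_scal_l (fun t => Cmod (t, k) + t) (/ 2)).
  apply (continuous_plus (fun t => Cmod (t, k)) (fun t => t)); [exact Hm | apply continuous_id].
- apply (continuous_scal_r (if Rlt_dec k 0 then -1 else 1) (fun t => sqrt ((Cmod (t, k) - t) / 2))).
  apply continuous_sqrt_comp, (continuous_scal_l (fun t => Cmod (t, k) - t) (/ 2)).
  apply (continuous_minus (fun t => Cmod (t, k)) (fun t => t)); [exact Hm | apply continuous_id].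
Qed.

Lemma continuous_Csqrt_re (k t : R) : continuous (Csqrt_re k) t.
Proof. exact (continuous_fst_comp _ t (continuous_Csqrt_line k t)). Qed.

Lemma is_RInt_exp_Csqrt_re (k c d u v : R) : k <> 0 -> c <> 0 ->
  is_RInt (fun t => exp (c * (Csqrt_re k t - d)) * (Csqrt_re k t / (2 * Cmod (t, k)))) u v
    (exp (c * (Csqrt_re k v - d)) / c - exp (c * (Csqrt_re k u - d)) / c).
Proof.
intros Hk Hc.
apply (is_RInt_derive (fun t => exp (c * (Csqrt_re k t - d)) / c)).
- intros z _.
  assert (Hout : is_derive (fun y => exp (c * (y - d)) / c) (Csqrt_re k z)
                   (exp (c * (Csqrt_re k z - d)))).
  { auto_derive; [easy | unfold Rminus; field; exact Hc]. }
  assert (H := is_derive_comp _ _ z _ _ Hout (is_derive_Csqrt_re k z Hk)).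
  unfold scal in H; simpl in H; unfold mult in H; simpl in H. rewrite Rmult_comm in H. exact H.
- intros z _. assert (Hm := Cmod_line_pos k z Hk).
  apply (continuous_mult (K := R_AbsRing) (fun t => exp (c * (Csqrt_re k t - d)))).
  + apply continuous_exp_comp, (continuous_scal_r c (fun t => Csqrt_re k t - d)).
    apply (continuous_minus (Csqrt_re k) (fun _ => d));
      [apply continuous_Csqrt_re | apply continuous_const].
  + apply (continuous_mult (K := R_AbsRing) (Csqrt_re k)); [apply continuous_Csqrt_re|].
    apply continuous_Rinv_comp; [|lra].
    apply (continuous_scal_r 2 (fun t => Cmod (t, k))), continuous_Cmod_line.
Qed.

Lemma filterlim_exp_Csqrt_re (k c d : R) : c < 0 ->
  filterlim (fun t => exp (c * (Csqrt_re k t - d))) (Rbar_locally p_infty) (locally 0).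
Proof.
intros Hc. apply filterlim_locally. intros eps.
set (y0 := Rmax 0 (d + ln eps / c)). assert (Hy0 : 0 <= y0) by apply Rmax_l.
exists (y0 ^ 2). intros t Ht.
assert (Hsqrt : y0 < sqrt t).
{ rewrite <- (sqrt_pow2 y0 Hy0). apply sqrt_lt_1_alt. split; [nra | exact Ht]. }
assert (Hp := Csqrt_re_ge_sqrt k t ltac:(nra)).
assert (Hlt : c * (Csqrt_re k t - d) < ln eps).
{ assert (d + ln eps / c < Csqrt_re k t) by (generalize (Rmax_r 0 (d + ln eps / c)); fold y0; lra).
  replace (ln eps) with (c * (ln eps / c)) by (field; lra). nra. }
change (Rabs (exp (c * (Csqrt_re k t - d)) - 0) < eps).
rewrite Rminus_0_r, Rabs_pos_eq by apply Rlt_le, exp_pos.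
rewrite <- (exp_ln eps) by apply cond_pos. now apply exp_increasing.
Qed.

Lemma Cmod_fA (al T x : R) (u : C) : 0 <= x ->
  Cmod (fA al T u x) =
  Rabs (sin (al * PI) / (al * PI)) * (x * exp (fst (Csqrt u) - T)) /
  (2 * (sqrt (Cmod u) * Cmod (Cexp (Cmult (RtoC (/ al)) (Cminus (Csqrt u) (RtoC T))) + RtoC x))).
Proof.
intros Hx. unfold fA.
rewrite Cmod_mult, Cmod_Cdiv, !Cmod_mult, !Cmod_R, Cmod_Cexp, Cmod_Csqrt.
rewrite (Rabs_pos_eq x Hx), (Rabs_pos_eq 2) by lra.
cbn [fst Cminus Cplus RtoC Copp]. unfold Rdiv, Rminus. rewrite !Rmult_assoc. reflexivity.
Qed.

Lemma Cmod_Cexp_add_ge (r th x : R) : 0 < x ->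
  (0 <= cos th \/ 2 * x <= exp r \/ 8 * exp r <= 5 * x) ->
  (exp r + x) / 8 <= Cmod (Cexp (r, th) + RtoC x).
Proof.
intros Hx Hcases. set (E := exp r) in *. assert (HE : 0 < E) by apply exp_pos.
assert (Hsq : Cmod (Cexp (r, th) + RtoC x) ^ 2 = E ^ 2 + 2 * E * x * cos th + x ^ 2).
{ unfold Cmod, Cexp; cbn [fst snd Cplus RtoC]. fold E.
  rewrite pow2_sqrt by (apply Rplus_le_le_0_compat; apply pow2_ge_0).
  replace ((E * cos th + x) ^ 2 + (E * sin th + 0) ^ 2)
    with (E ^ 2 * (sin th ^ 2 + cos th ^ 2) + 2 * E * x * cos th + x ^ 2) by ring.
  rewrite <- !Rsqr_pow2, sin2_cos2. ring. }
assert (Hcos := COS_bound th).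
assert (HEx : 0 < E * x) by nra.
apply Rsqr_incr_0_var; [rewrite !Rsqr_pow2, Hsq | apply Cmod_ge_0].
destruct Hcases as [Hc | [Hc | Hc]].
- assert (0 <= E * x * cos th) by (apply Rmult_le_pos; lra). nra.
- assert (((E + x) / 8) ^ 2 <= (E - x) ^ 2) by (apply pow_incr; split; lra). nra.
- assert (((E + x) / 8) ^ 2 <= (x - E) ^ 2) by (apply pow_incr; split; lra). nra.
Qed.

Lemma PI_gt_3 : 3 < PI.
Proof. generalize PI2_3_2. lra. Qed.

Lemma Csqrt_line_cases (al P p q : R) : 0 < al -> al * PI <= P -> 0 < p ->
  p * q = 2 * al * PI * P ->
  0 <= cos (q / al) \/ 1 <= (p - P) / al \/ (p - P) / al <= - 3 / 5.
Proof.
intros Hal HP Hp Hpq. assert (HPI := PI_gt_3). assert (HPpos : 0 < P) by nra.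
destruct (Rle_dec (4 * P / 3) p) as [Hfar | Hnear1].
{ right; left. apply (Rmult_le_reg_r al); [exact Hal|].
  replace ((p - P) / al * al) with (p - P) by (field; lra). nra. }
destruct (Rle_dec p (4 * P / 5)) as [Hfar | Hnear2].
{ right; right. apply (Rmult_le_reg_r al); [exact Hal|].
  replace ((p - P) / al * al) with (p - P) by (field; lra). nra. }
left.
assert (Hshift : q / al = 2 * PI * (P - p) / p + 2 * INR 1 * PI).
{ apply (Rmult_eq_reg_r (al * p)); [|nra]. simpl. field_simplify; [|lra|lra]. nra. }
rewrite Hshift, cos_period. apply cos_ge_0.
- apply (Rmult_le_reg_r p); [exact Hp|]. field_simplify; [nra | lra].
- apply (Rmult_le_reg_r p); [exact Hp|]. field_simplify; [nra | lra].
Qed.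

Lemma exp_div_exp_add_le (al T x y : R) : 0 < al -> 0 < x ->
  x * exp (y - T) / (exp ((y - T) / al) + x) <=
  Rpower x al * Rmin (exp (y - (T + al * ln x)))
                     (exp (- ((1 - al) / al) * (y - (T + al * ln x)))).
Proof.
intros Hal Hx.
assert (HE := exp_pos ((y - T) / al)). assert (Hey := exp_pos (y - T)).
apply Rmin_case.
- unfold Rpower. rewrite <- exp_plus.
  replace (al * ln x + (y - (T + al * ln x))) with (y - T) by ring.
  apply (Rmult_le_reg_r (exp ((y - T) / al) + x)); [lra|].
  unfold Rdiv. rewrite Rmult_assoc, Rinv_l, Rmult_1_r by lra. nra.
- apply Rle_trans with (x * exp (y - T) / exp ((y - T) / al)).
  + unfold Rdiv. apply Rmult_le_compat_l; [nra|]. apply Rinv_le_contravar; lra.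
  + right. unfold Rpower. rewrite <- (exp_ln x) at 1 by exact Hx.
    unfold Rdiv. rewrite <- exp_Ropp, <- !exp_plus. f_equal. field. lra.
Qed.

Lemma sinc_PI_bounds (al : R) : 0 < al < 1 ->
  0 <= sin (al * PI) / (al * PI) <= 1 /\ sin (al * PI) / (al * PI) <= (1 - al) / al.
Proof.
intros Hal. assert (HPI := PI_RGT_0).
assert (Hpos : 0 < sin (al * PI)) by (apply sin_gt_0; nra).
assert (Hlt : sin (al * PI) < al * PI) by (apply sin_lt_x; nra).
assert (Hlt' : sin (al * PI) < (1 - al) * PI).
{ rewrite <- sin_PI_x. replace (PI - al * PI) with ((1 - al) * PI) by ring. apply sin_lt_x; nra. }
split; [split|].
- apply Rlt_le, Rdiv_lt_0_compat; nra.
- apply Rmult_le_reg_r with (al * PI); [nra|]. field_simplify; nra.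
- apply Rmult_le_reg_r with (al * PI); [nra|]. field_simplify; lra.
Qed.

Lemma exp_le_1 (y : R) : y <= 0 -> exp y <= 1.
Proof.
intros Hy. rewrite <- exp_0. destruct (Rle_lt_or_eq_dec y 0 Hy) as [Hlt | ->]; [|lra].
now apply Rlt_le, exp_increasing.
Qed.

Section HorizontalLine.

Variables (al T x k : R).
Hypothesis Hal : 0 < al < 1.
Hypothesis Hx : 0 < x.
Let P := T + al * ln x.
Hypothesis HP : al * PI <= P.
Hypothesis Hk : k ^ 2 = (4 * al * PI * P) ^ 2.

Let be := (1 - al) / al.
Let A := 16 * (sin (al * PI) / (al * PI)) * Rpower x al.
Let tP := P ^ 2 - 4 * al ^ 2 * PI ^ 2.
Let integrand (w t : R) : C := Cmult (fA al T (t, k) x) (Cexp (0, w * t)).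
Let majorant (c t : R) : R :=
  A * (exp (c * (Csqrt_re k t - P)) * (Csqrt_re k t / (2 * Cmod (t, k)))).

Lemma line_height_pos : 0 < P.
Proof. assert (0 < al * PI) by (apply Rmult_lt_0_compat; [lra | apply PI_RGT_0]). lra. Qed.

Lemma line_scale_pos : 0 < 4 * al * PI * P.
Proof.
assert (0 < al * PI) by (apply Rmult_lt_0_compat; [lra | apply PI_RGT_0]). nra.
Qed.

Lemma line_abs_k : Rabs k = 4 * al * PI * P.
Proof.
rewrite <- sqrt_Rsqr_abs, Rsqr_pow2, Hk. apply sqrt_pow2. generalize line_scale_pos. lra.
Qed.

Lemma line_k_neq0 : k <> 0.
Proof.
intros Hk0. assert (H := line_abs_k). rewrite Hk0, Rabs_R0 in H. generalize line_scale_pos. lra.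
Qed.

Lemma line_turning_point : P ^ 2 - (k / (2 * P)) ^ 2 = tP.
Proof.
assert (HP0 := line_height_pos). unfold tP. unfold Rdiv. rewrite Rpow_mult_distr, Hk. field. lra.
Qed.

Lemma fA_denominator_ge (t : R) :
  (exp ((Csqrt_re k t - T) / al) + x) / 8 <=
  Cmod (Cexp (Cmult (RtoC (/ al)) (Cminus (Csqrt (t, k)) (RtoC T))) + RtoC x).
Proof.
assert (Hk0 := line_k_neq0). assert (HP0 := line_height_pos).
assert (Hp := Csqrt_re_pos k t Hk0). assert (Hq := Im_Csqrt_line k t Hk0).
unfold Csqrt_re in *. destruct (Csqrt (t, k)) as [p q]; simpl in Hp, Hq.
replace (Cmult (RtoC (/ al)) (Cminus (p, q) (RtoC T))) with ((p - T) / al, q / al)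
  by (unfold Cmult, Cminus, Cplus, Copp, RtoC; simpl; f_equal; field; lra).
apply Cmod_Cexp_add_ge; [exact Hx|].
replace (exp ((p - T) / al)) with (x * exp ((p - P) / al)).
2:{ rewrite <- (exp_ln x) at 1 by exact Hx. rewrite <- exp_plus. f_equal. unfold P. field. lra. }
replace (cos (q / al)) with (cos (Rabs q / al)).
2:{ destruct (Rcase_abs q); [rewrite Rabs_left, <- cos_neg by lra | rewrite Rabs_right by lra];
      f_equal; field; lra. }
assert (Hpq : p * Rabs q = 2 * al * PI * P).
{ rewrite Hq, Rabs_div, (Rabs_pos_eq (2 * p)), line_abs_k by lra. field. lra. }
destruct (Csqrt_line_cases al P p (Rabs q) (proj1 Hal) HP Hp Hpq) as [Hc | [Hc | Hc]].
- now left.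
- right; left. generalize (exp_ineq1_le ((p - P) / al)). nra.
- right; right. set (y := (p - P) / al) in *.
  assert (Hinv : exp (- y) * exp y = 1) by (rewrite <- exp_plus, Rplus_opp_l; apply exp_0).
  generalize (exp_ineq1_le (- y)) (exp_pos y) (exp_pos (- y)). nra.
Qed.

Lemma Cmod_fA_line_le (t : R) : 0 <= t ->
  Cmod (fA al T (t, k) x) <=
  A * Rmin (exp (Csqrt_re k t - P)) (exp (- be * (Csqrt_re k t - P))) *
  (Csqrt_re k t / (2 * Cmod (t, k))).
Proof.
intros Ht. assert (Hk0 := line_k_neq0).
assert (HC := proj1 (proj1 (sinc_PI_bounds al Hal))).
rewrite Cmod_fA, Rabs_pos_eq by lra.
assert (HD := fA_denominator_ge t).
assert (Hratio := exp_div_exp_add_le al T x (Csqrt_re k t) (proj1 Hal) Hx). fold P be in Hratio.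
assert (Hm0 := Cmod_line_pos k t Hk0). assert (Hsm := Cmod_line_le k t Hk0 Ht).
change (fst (Csqrt (t, k))) with (Csqrt_re k t). unfold A.
set (p := Csqrt_re k t) in *. set (m := Cmod (t, k)) in *.
set (E := exp ((p - T) / al)) in *. set (C := sin (al * PI) / (al * PI)) in *.
set (D := Cmod _) in *. set (W := x * exp (p - T)) in *. set (B := Rpower x al * Rmin _ _) in *.
assert (HE : 0 < E) by apply exp_pos.
assert (Hs : 0 < sqrt m) by (apply sqrt_lt_R0; exact Hm0).
assert (HW : 0 <= W) by (apply Rlt_le, Rmult_lt_0_compat; [exact Hx | apply exp_pos]).
assert (HB : 0 <= B).
{ apply Rle_trans with (W / (E + x)); [apply Rdiv_le_0_compat; lra | exact Hratio]. }
apply Rle_trans with (4 * C * (W / (E + x)) / sqrt m).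
{ replace (4 * C * (W / (E + x)) / sqrt m) with (C * W / (2 * (sqrt m * ((E + x) / 8))))
    by (field; lra).
  unfold Rdiv. apply Rmult_le_compat_l; [nra|].
  apply Rinv_le_contravar; [nra|]. apply Rmult_le_compat_l; [lra|]. apply Rmult_le_compat_l; lra. }
apply Rle_trans with (4 * C * B * (2 * p / m)); [|right; unfold B; field; lra].
unfold Rdiv. rewrite Rmult_assoc, (Rmult_assoc (4 * C)). apply Rmult_le_compat_l; [nra|].
apply Rle_trans with (B * / sqrt m).
{ apply Rmult_le_compat_r; [apply Rlt_le, Rinv_0_lt_compat; lra | exact Hratio]. }
apply Rmult_le_compat_l; [exact HB|].
apply (Rmult_le_reg_r (m * sqrt m)); [nra|].
replace (/ sqrt m * (m * sqrt m)) with m by (field; lra).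
replace (2 * p * / m * (m * sqrt m)) with (2 * p * sqrt m) by (field; lra).
exact Hsm.
Qed.

Lemma majorant_scale_nonneg : 0 <= A.
Proof. apply Rmult_le_pos; [generalize (sinc_PI_bounds al Hal); lra | apply Rlt_le, exp_pos]. Qed.

Lemma Cmod_integrand_le (w t c : R) : 0 <= t -> c = 1 \/ c = - be ->
  Cmod (integrand w t) <= majorant c t.
Proof.
intros Ht Hc. assert (Hk0 := line_k_neq0). unfold integrand, majorant.
rewrite Cmod_mult, Cmod_Cexp. simpl fst. rewrite exp_0, Rmult_1_r.
eapply Rle_trans; [exact (Cmod_fA_line_le t Ht)|].
assert (HA := majorant_scale_nonneg).
assert (Hdp : 0 <= Csqrt_re k t / (2 * Cmod (t, k))).
{ apply Rlt_le, Rdiv_lt_0_compat; [now apply Csqrt_re_pos|].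
  generalize (Cmod_line_pos k t Hk0). lra. }
rewrite Rmult_assoc. apply Rmult_le_compat_l; [exact HA|]. apply Rmult_le_compat_r; [exact Hdp|].
destruct Hc as [-> | ->]; [rewrite Rmult_1_l; apply Rmin_l | apply Rmin_r].
Qed.

Lemma is_RInt_majorant (c u v : R) : c <> 0 ->
  is_RInt (majorant c) u v
    (A * (exp (c * (Csqrt_re k v - P)) / c - exp (c * (Csqrt_re k u - P)) / c)).
Proof.
intros Hc. exact (is_RInt_scal _ u v A _ (is_RInt_exp_Csqrt_re k c P u v line_k_neq0 Hc)).
Qed.

Lemma continuous_fA_line (t : R) : continuous (fun t => fA al T (t, k) x) t.
Proof.
assert (Hk0 := line_k_neq0). assert (Hs := continuous_Csqrt_line k t).
assert (Hden : Cmult (RtoC 2) (Cmult (Csqrt (t, k))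
   (Cplus (Cexp (Cmult (RtoC (/ al)) (Cminus (Csqrt (t, k)) (RtoC T)))) (RtoC x))) <> 0%C).
{ intros H0. apply (f_equal Cmod) in H0. rewrite !Cmod_mult, Cmod_Csqrt, Cmod_0 in H0.
  assert (HD := fA_denominator_ge t). assert (HE := exp_pos ((Csqrt_re k t - T) / al)).
  assert (Hm : 0 < sqrt (Cmod (t, k))) by apply sqrt_lt_R0, Cmod_line_pos, Hk0.
  rewrite Cmod_R, Rabs_pos_eq in H0 by lra. nra. }
unfold fA. cbv zeta. unfold Cdiv.
apply continuous_Cmult_comp; [apply continuous_const|].
apply continuous_Cmult_comp.
- apply continuous_Cmult_comp; [apply continuous_const|].
  apply continuous_Cexp_comp, continuous_Cminus_comp; [exact Hs | apply continuous_const].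
- apply continuous_Cinv_comp; [|exact Hden].
  apply continuous_Cmult_comp; [apply continuous_const|].
  apply continuous_Cmult_comp; [exact Hs|].
  apply continuous_Cplus_comp; [|apply continuous_const].
  apply continuous_Cexp_comp, continuous_Cmult_comp; [apply continuous_const|].
  apply continuous_Cminus_comp; [exact Hs | apply continuous_const].
Qed.

Lemma ex_RInt_integrand (w u v : R) : ex_RInt (V := C_R_CompleteNormedModule) (integrand w) u v.
Proof.
apply ex_RInt_continuous. intros t _. unfold integrand.
apply continuous_Cmult_comp; [apply continuous_fA_line|].
apply continuous_Cexp_comp, continuous_C_pair; simpl; [apply continuous_const|].
apply (continuous_mult (K := R_AbsRing) (fun _ => w) (fun t => t));
  [apply continuous_const | apply continuous_id].
Qed.

Lemma Cmod_RInt_integrand_le (w h : R) : 0 < h <= tP ->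
  Cmod (RInt (V := C_R_CompleteNormedModule) (integrand w) h tP) <= A.
Proof.
intros Hh. rewrite Cmod_norm.
apply Rle_trans with (A * (exp (1 * (Csqrt_re k tP - P)) / 1 - exp (1 * (Csqrt_re k h - P)) / 1)).
- apply (norm_RInt_le (V := C_R_NormedModule) (integrand w) (majorant 1) h tP);
    [lra | | | apply is_RInt_majorant; lra].
  + intros t Ht. rewrite <- Cmod_norm. apply Cmod_integrand_le; [lra | now left].
  + apply (RInt_correct (V := C_R_CompleteNormedModule)), ex_RInt_integrand.
- assert (Hle : Csqrt_re k tP <= P).
  { apply Csqrt_re_le; [apply line_k_neq0 | apply line_height_pos |].
    rewrite line_turning_point. lra. }
  assert (exp (1 * (Csqrt_re k tP - P)) <= 1) by (apply exp_le_1; lra).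
  assert (HA := majorant_scale_nonneg).
  generalize (exp_pos (1 * (Csqrt_re k h - P))). rewrite !Rdiv_1_r. nra.
Qed.

Lemma is_RInt_gen_integrand_p_infty (w : R) : 0 < tP ->
  exists I, is_RInt_gen (integrand w) (at_point tP) (Rbar_locally p_infty) I /\ Cmod I <= A / be.
Proof.
intros HtP. assert (Hbe : 0 < be) by (apply Rdiv_lt_0_compat; lra).
assert (HA := majorant_scale_nonneg).
set (G t := A * (exp (- be * (Csqrt_re k t - P)) / - be)).
destruct (is_RInt_gen_p_infty_le (V := C_R_CompleteNormedModule)
           (integrand w) (majorant (- be)) G tP 0)
  as [I [HI HIn]].
- intros u v _. apply ex_RInt_integrand.
- intros t Ht. rewrite <- Cmod_norm. apply Cmod_integrand_le; [lra | now right].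
- intros u v _. unfold G. rewrite <- Rmult_minus_distr_l. apply is_RInt_majorant. lra.
- replace (locally 0) with (locally (A * (0 / - be))) by (f_equal; field; lra).
  apply (filterlim_comp _ _ _ (fun t => exp (- be * (Csqrt_re k t - P))) (fun y => A * (y / - be))
           _ (locally 0)).
  + apply filterlim_exp_Csqrt_re. lra.
  + apply (continuous_scal_r A (fun y => y / - be)), (continuous_scal_l (fun y => y) (/ - be)).
    apply continuous_id.
- exists I. split; [exact HI|]. rewrite Cmod_norm. apply (Rle_trans _ _ _ HIn).
  assert (Hge : P <= Csqrt_re k tP).
  { apply Csqrt_re_ge; [apply line_k_neq0 | apply line_height_pos |].
    rewrite line_turning_point. lra. }
  assert (exp (- be * (Csqrt_re k tP - P)) <= 1) by (apply exp_le_1; nra).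
  unfold G. replace (0 - A * (exp (- be * (Csqrt_re k tP - P)) / - be))
    with (A / be * exp (- be * (Csqrt_re k tP - P))) by (field; lra).
  assert (0 <= A / be) by (apply Rdiv_le_0_compat; lra). nra.
Qed.

Lemma majorant_total_le : A + A / be <= 32 * Rpower x al.
Proof.
destruct (sinc_PI_bounds al Hal) as [[HC0 HC1] HCb].
assert (Hbe : 0 < be) by (apply Rdiv_lt_0_compat; lra).
assert (HR := exp_pos (al * ln x)). fold (Rpower x al) in HR.
unfold A. set (C := sin (al * PI) / (al * PI)) in *.
assert (C / be <= 1) by (apply (Rdiv_le_1 _ _ Hbe), HCb).
replace (16 * C * Rpower x al + 16 * C * Rpower x al / be)
  with (16 * Rpower x al * (C + C / be)) by (field; lra).
nra.
Qed.

Lemma fA_line_integral_bound (w h : R) : 0 < h -> h <= P ^ 2 - 4 * al ^ 2 * PI ^ 2 ->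
  exists I, is_int_half (fun t => Cmult (fA al T (t, k) x) (Cexp (0, w * t))) h I /\
    Cmod I <= 32 * Rpower x al.
Proof.
intros Hh HhP. fold tP in HhP.
destruct (is_RInt_gen_integrand_p_infty w ltac:(lra)) as [I2 [HI2 HI2n]].
set (I1 := RInt (V := C_R_CompleteNormedModule) (integrand w) h tP).
exists (plus I1 I2). split.
- apply (is_RInt_gen_Chasles (integrand w) tP); [|exact HI2].
  apply is_RInt_gen_at_point, (RInt_correct (V := C_R_CompleteNormedModule)), ex_RInt_integrand.
- eapply Rle_trans; [apply Cmod_triangle|].
  generalize (Cmod_RInt_integrand_le w h ltac:(lra)) majorant_total_le. fold I1. lra.
Qed.

End HorizontalLine.

Lemma two_sqr_le_one_add_mul_sqrt (m : R) : 0 < m < 1 -> 2 * m ^ 2 <= 1 + m * sqrt (2 - m ^ 2).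
Proof.
intros Hm. set (D := sqrt (2 - m ^ 2)).
assert (HD2 : D ^ 2 = 2 - m ^ 2) by (apply pow2_sqrt; nra).
assert (HmD : 0 <= m * D) by (apply Rmult_le_pos; [lra | apply sqrt_pos]).
destruct (Rle_dec (2 * m ^ 2) 1); [lra|].
(* (m D)^2 - (2 m^2 - 1)^2 = (5 m^2 - 1)(1 - m^2) *)
assert (Hfac : 0 <= (5 * m ^ 2 - 1) * (1 - m ^ 2)) by (apply Rmult_le_pos; nra).
assert (2 * m ^ 2 - 1 <= m * D)
  by (apply Rsqr_incr_0_var; unfold Rsqr; nra).
lra.
Qed.

Lemma sqrt_ustar_mul_le (al : R) : 0 < al < 1 -> sqrt (ustar al) * (2 * al - 1) <= 2 * al.
Proof.
intros Hal. set (m := 2 * al - 1).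
destruct (Rle_lt_dec m 0) as [Hm | Hm]; [generalize (sqrt_pos (ustar al)); nra|].
assert (Hm1 : m < 1) by (unfold m; lra).
assert (Hkey := two_sqr_le_one_add_mul_sqrt m (conj Hm Hm1)).
set (D := sqrt (2 - m ^ 2)) in *.
assert (HD2 : D ^ 2 = 2 - m ^ 2) by (apply pow2_sqrt; nra).
assert (Hu : ustar al = 2 * (1 - m * D) / (1 - m) ^ 2).
{ unfold ustar. replace (4 * al - 4 * al ^ 2 + 1) with (2 - m ^ 2) by (unfold m; ring).
  fold D. unfold m. field. lra. }
assert (HmD : 0 <= 1 - m * D).
{ assert (Hprod : (1 - m * D) * (1 + m * D) = (1 - m ^ 2) ^ 2).
  { replace ((1 - m * D) * (1 + m * D)) with (1 - m ^ 2 * D ^ 2) by ring. rewrite HD2. ring. }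
  apply Rnot_lt_le. intros Hneg. assert (0 < 1 + m * D) by nra. nra. }
assert (Hum : ustar al * m ^ 2 <= (2 * al) ^ 2).
{ rewrite Hu. replace (2 * al) with (1 + m) by (unfold m; ring).
  apply (Rmult_le_reg_r ((1 - m) ^ 2)); [nra|].
  replace (2 * (1 - m * D) / (1 - m) ^ 2 * m ^ 2 * (1 - m) ^ 2) with (2 * m ^ 2 * (1 - m * D))
    by (field; lra).
  nra. }
assert (Hu0 : 0 <= ustar al) by (rewrite Hu; apply Rdiv_le_0_compat; [lra | nra]).
rewrite <- (sqrt_pow2 m), <- sqrt_mult_alt, <- (sqrt_pow2 (2 * al)) by lra.
apply sqrt_le_1_alt, Hum.
Qed.

Lemma gammaA_nonneg (al : R) : 0 < al < 1 -> 0 <= gammaA al.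
Proof.
intros Hal. assert (Hkey := sqrt_ustar_mul_le al Hal).
unfold gammaA. cbv zeta.
replace (/ (al / (1 - al))) with ((1 - al) / al) by (field; lra).
set (su := sqrt (ustar al)) in *. assert (Hsu : 0 <= su) by apply sqrt_pos.
assert (Hnum : 0 < (1 - al) / al * su + 1).
{ assert (0 <= (1 - al) / al * su) by (apply Rmult_le_pos; [apply Rdiv_le_0_compat |]; lra). lra. }
destruct (Rle_lt_dec su 1) as [Hle | Hgt].
- (* the argument of [ln] is nonpositive (with [/ 0 = 0]), where [ln] is 0 *)
  replace (ln (((1 - al) / al * su + 1) / (su - 1))) with 0; [lra|].
  unfold ln. destruct (Rlt_dec 0 _) as [Hpos | _]; [exfalso | reflexivity].
  destruct (Rle_lt_or_eq_dec su 1 Hle) as [Hlt | Heq].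
  + assert (Hneg : / (su - 1) < 0) by (apply Rinv_lt_0_compat; lra).
    unfold Rdiv in Hpos. nra.
  + rewrite Heq, Rminus_diag in Hpos. unfold Rdiv in Hpos. rewrite Rinv_0, Rmult_0_r in Hpos. lra.
- assert (Hratio : 1 <= ((1 - al) / al * su + 1) / (su - 1)).
  { apply (Rmult_le_reg_r (su - 1)); [lra|].
    unfold Rdiv. rewrite Rmult_1_l, Rmult_assoc, Rinv_l, Rmult_1_r by lra.
    apply (Rmult_le_reg_r al); [lra|].
    replace (((1 - al) * / al * su + 1) * al) with ((1 - al) * su + al) by (field; lra). nra. }
  assert (0 <= ln (((1 - al) / al * su + 1) / (su - 1))) by (rewrite <- ln_1; apply ln_le; lra).
  nra.
Qed.

Lemma Rceil_ge (y : R) : y <= Rceil y.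
Proof. unfold Rceil. destruct (base_Int_part (- y)). lra. Qed.

Lemma M0_ge (sigma : R) : 2 + 18 * PI ^ 2 / sigma ^ 2 <= M0 sigma.
Proof.
unfold M0. generalize (Rceil_ge (9 * PI ^ 2 / sigma ^ 2)).
set (c := Rceil (9 * PI ^ 2 / sigma ^ 2)). set (c' := 2 * Rceil ((1 + sqrt (PI / sigma)) ^ 4)).
generalize (Rmax_r (sigma ^ 2 / 4) (Rmax (1 + c) c')) (Rmax_l (1 + c) c'). lra.
Qed.

Lemma gammaA_le_height (al T x : R) : 0 < al -> xstar al T <= x -> gammaA al <= T + al * ln x.
Proof.
intros Hal Hx. apply ln_le in Hx; [|apply exp_pos]. unfold xstar in Hx. rewrite ln_exp in Hx.
apply (Rmult_le_compat_l al) in Hx; [|lra].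
replace (al * (/ al * (gammaA al - T))) with (gammaA al - T) in Hx by (field; lra). lra.
Qed.

Lemma height_bounds_of_M0 (al sigma P : R) : 0 < al -> 0 < sigma -> 0 <= P ->
  P ^ 2 - al ^ 2 * PI ^ 2 > M0 sigma * (sigma ^ 2 * al ^ 2) ->
  al * PI <= P /\ sigma ^ 2 * al ^ 2 <= P ^ 2 - 4 * al ^ 2 * PI ^ 2.
Proof.
intros Hal Hsig HP HM.
assert (Hh : 0 < sigma ^ 2 * al ^ 2) by (apply Rmult_lt_0_compat; apply pow_lt; lra).
assert (HMh : 2 * (sigma ^ 2 * al ^ 2) + 18 * PI ^ 2 * al ^ 2 <= M0 sigma * (sigma ^ 2 * al ^ 2)).
{ replace (2 * (sigma ^ 2 * al ^ 2) + 18 * PI ^ 2 * al ^ 2)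
    with ((2 + 18 * PI ^ 2 / sigma ^ 2) * (sigma ^ 2 * al ^ 2)) by (field; lra).
  apply Rmult_le_compat_r; [lra | apply M0_ge]. }
assert (0 <= PI ^ 2 * al ^ 2) by (apply Rmult_le_pos; apply pow2_ge_0).
split; [|lra].
apply Rsqr_incr_0_var; [unfold Rsqr; nra | exact HP].
Qed.

Lemma Cexp_line_shift (w b t : R) :
  Cexp (Cmult (0, w) (t, b)) = scal (exp (- (w * b))) (Cexp (0, w * t)).
Proof.
rewrite <- Cexp_pair. f_equal. unfold Cmult; simpl. f_equal; ring.
Qed.

Theorem lemmaA3 :
  forall n : nat, (1 <= n)%nat ->
  exists K : R,
  forall (alpha sigma : R) (N1 : nat) (x s : R),
    0 < alpha < 1 -> 0 < sigma -> (1 <= N1)%nat ->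
    (s = 1 \/ s = -1) ->
    let h := sigma ^ 2 * alpha ^ 2 in
    let T := sigma * alpha * sqrt (INR N1) in
    xstar alpha T <= x <= 1 ->
    (T + alpha * ln x) ^ 2 - alpha ^ 2 * PI ^ 2 > M0 sigma * h ->
    let a := 2 * alpha * PI * (T + alpha * ln x) in
    let c := 2 * INR n * PI / h in
    exists I1 I2 : C,
      is_int_half
        (fun t => Cmult (fA alpha T (t, s * 2 * a) x)
                        (Cexp (Cmult (0, s * c) (t, s * 2 * a)))) h I1 /\
      is_int_half
        (fun t => Cmult (fA alpha T (t, s * 2 * a) x)
                        (Cexp (0, s * c * t))) h I2 /\
      Cmod I1 = exp (- (4 * INR n * PI * a / h)) * Cmod I2 /\
      Cmod I2 <= K * Rpower x alpha.
Proof.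
intros n _. exists 32.
intros al sigma N1 x s Hal Hsig _ Hs h T Hx HM a c.
assert (Hx0 : 0 < x) by (eapply Rlt_le_trans; [apply exp_pos | apply Hx]).
assert (HP0 : 0 <= T + al * ln x).
{ generalize (gammaA_nonneg al Hal) (gammaA_le_height al T x (proj1 Hal) (proj1 Hx)). lra. }
destruct (height_bounds_of_M0 al sigma _ (proj1 Hal) Hsig HP0 HM) as [HPa HhP].
assert (Hk : (s * 2 * a) ^ 2 = (4 * al * PI * (T + al * ln x)) ^ 2).
{ unfold a. destruct Hs as [-> | ->]; ring. }
assert (Hh : 0 < h) by (unfold h; apply Rmult_lt_0_compat; apply pow_lt; lra).
destruct (fA_line_integral_bound al T x (s * 2 * a) Hal Hx0 HPa Hk (s * c) h Hh HhP)
  as [I2 [HI2 HI2n]].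
assert (Hdecay : s * c * (s * 2 * a) = 4 * INR n * PI * a / h).
{ unfold c. destruct Hs as [-> | ->]; field; lra. }
exists (scal (exp (- (4 * INR n * PI * a / h))) I2), I2.
split; [|split; [exact HI2 | split; [|exact HI2n]]].
- unfold is_int_half. rewrite <- Hdecay.
  replace (fun t => Cmult (fA al T (t, s * 2 * a) x) (Cexp (Cmult (0, s * c) (t, s * 2 * a))))
    with (fun t => scal (exp (- (s * c * (s * 2 * a))))
                        (Cmult (fA al T (t, s * 2 * a) x) (Cexp (0, s * c * t)))).
  + apply (is_RInt_gen_scal (V := C_R_NormedModule)), HI2.
  + apply functional_extensionality. intros t.
    rewrite Cexp_line_shift, !scal_R_Cmult, !Cmult_assoc, (Cmult_comm (RtoC _)). reflexivity.
- rewrite scal_R_Cmult, Cmod_mult, Cmod_R, Rabs_pos_eq; [reflexivity | apply Rlt_le, exp_pos].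
Qed.
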